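(* Let $A\in\mathbf{R}^{I\times H}$ with columns $a_1,\dots,a_H$, and let $\mathcal{C}=\{A\nu:\nu\in\mathbf{R}^H,\ \nu\ge 0\}$. Let $B\in\mathbf{R}^{m\times I}$ be such that $\mathcal{C}=\{t\in\mathbf{R}^I: Bt\le 0\}$, with rows $b_1',\dots,b_m'$ ordered as $B=\begin{bmatrix}B^{\le}\\ B^{=}\end{bmatrix}$, where $B^{\le}\in\mathbf{R}^{\bar m\times I}$ consists of the rows corresponding to inequality constraints (rows $b_k$ for which $b_k'a_h\neq 0$ for some $h$) and $B^{=}\in\mathbf{R}^{(m-\bar m)\times I}$ consists of the rows corresponding to equality constraints (rows $b_k$ with $b_k't=0$ for all $t\in\mathcal{C}$). For $\tau>0$ define $\mathcal{C}_\tau=\{A\nu:\nu\ge(\tau/H)\mathbf{1}_H\}$, where $\mathbf{1}_H$ is the $H$-vector of ones. Then $$\mathcal{C}_\tau=\{t\in\mathbf{R}^I: Bt\le-\tau\phi\}$$ for some $\phi=(\phi_1,\dots,\phi_m)'$ in the column space of $B$ with the properties that (i) $(\phi_1,\dots,\phi_{\bar m})'\in\mathbf{R}^{\bar m}_{++}$, and (ii) $\phi_k=0$ for all $k>\bar m$.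
   Context: Vector inequalities are componentwise; $\mathbf{R}^{\bar m}_{++}$ denotes vectors with all entries strictly positive. *)

From HB Require Import structures.
From mathcomp Require Import all_boot all_order all_algebra.
Set Implicit Arguments. Unset Strict Implicit. Unset Printing Implicit Defensive.
Import Order.TTheory GRing.Theory Num.Theory.
Local Open Scope ring_scope.

Definition cone_of (R : realFieldType) (I H : nat) (A : 'M[R]_(I, H))
  (t : 'cV[R]_I) : Prop :=
  exists nu : 'cV[R]_H, (forall h : 'I_H, 0 <= nu h 0) /\ t = A *m nu.

Definition cone_tau (R : realFieldType) (I H : nat) (A : 'M[R]_(I, H))
  (tau : R) (t : 'cV[R]_I) : Prop :=
  exists nu : 'cV[R]_H, (forall h : 'I_H, tau / H%:R <= nu h 0) /\ t = A *m nu.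

From HB Require Import structures.
From mathcomp Require Import all_boot all_order all_algebra.
Import Order.TTheory GRing.Theory Num.Theory.
Local Open Scope ring_scope.

(* C_tau is the translate c + C of the cone by its "centre" c = (tau/H) A 1_H,
   so t lies in C_tau iff B t <= B c.  Hence phi = -B c / tau works: B c < 0 on
   the inequality rows, because every column of A satisfies B a_h <= 0 and some
   column violates the row strictly, while B c = 0 on the equality rows
   because c lies in C. *)

Lemma sumr_lt0 (R : numDomainType) (J : finType) (F : J -> R) (j0 : J) :
  (forall j, F j <= 0) -> F j0 < 0 -> \sum_j F j < 0.
Proof.
move=> F_le0 Fj0_lt0; rewrite lt_neqAle sumr_le0 // andbT -oppr_eq0 -sumrN.
rewrite psumr_neq0 => [|j _]; last by rewrite oppr_ge0.
by apply/hasP; exists j0; rewrite ?mem_index_enum //= oppr_gt0.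
Qed.

Section GeneratedCone.

Context {R : realFieldType} {I H : nat} (A : 'M[R]_(I, H)).

Lemma cone_of_col (h : 'I_H) : cone_of A (col h A).
Proof.
exists (delta_mx h 0); split; last by rewrite colE.
by move=> l; rewrite mxE; case: (_ && _).
Qed.

Lemma cone_of_const (d : R) : 0 <= d -> cone_of A (A *m const_mx d).
Proof. by move=> d_ge0; exists (const_mx d); split=> // h; rewrite mxE. Qed.

Lemma cone_tauE (tau : R) (t : 'cV[R]_I) :
  cone_tau A tau t <-> cone_of A (t - A *m const_mx (tau / H%:R)).
Proof.
split=> [[nu [nu_ge t_def]] | [nu [nu_ge0 t_def]]].
- exists (nu - const_mx (tau / H%:R)); split; last by rewrite mulmxBr t_def.
  by move=> h; rewrite !mxE subr_ge0.
- exists (nu + const_mx (tau / H%:R)); split.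
    by move=> h; rewrite !mxE lerDr.
  by rewrite mulmxDr -t_def subrK.
Qed.

Context {m : nat} (B : 'M[R]_(m, I)).
Hypothesis cone_facets :
  forall t : 'cV[R]_I, cone_of A t <-> (forall k : 'I_m, (B *m t) k 0 <= 0).

Lemma mulmx_cone_le0 (k : 'I_m) (h : 'I_H) : (B *m A) k h <= 0.
Proof.
by have /cone_facets := cone_of_col h; move/(_ k); rewrite colE mulmxA -colE mxE.
Qed.

Lemma cone_of_translateP (c t : 'cV[R]_I) :
  cone_of A (t - c) <-> (forall k : 'I_m, (B *m t) k 0 <= (B *m c) k 0).
Proof.
have entryE k : (B *m (t - c)) k 0 = (B *m t) k 0 - (B *m c) k 0.
  by rewrite mulmxBr mxE [X in _ + X]mxE.
by apply: iff_trans (cone_facets _) _; split=> le_tc k; move: (le_tc k);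
  rewrite entryE subr_le0.
Qed.

Lemma cone_centre_lt0 (d : R) (k : 'I_m) :
  0 < d -> (exists h : 'I_H, (B *m A) k h != 0) ->
  (B *m (A *m (const_mx d : 'cV_H))) k 0 < 0.
Proof.
move=> d_gt0 [h0 BAh0_neq0]; rewrite mulmxA mxE.
apply: (@sumr_lt0 _ _ _ h0) => [h|]; rewrite [X in _ * X]mxE.
- by rewrite pmulr_lle0 // mulmx_cone_le0.
- by rewrite pmulr_llt0 // lt_neqAle BAh0_neq0 mulmx_cone_le0.
Qed.

End GeneratedCone.

Lemma row_mul_col_entry (R : pzSemiRingType) (m n p : nat)
    (B : 'M[R]_(m, n)) (A : 'M[R]_(n, p)) (k : 'I_m) (h : 'I_p) :
  (row k B *m col h A) 0 0 = (B *m A) k h.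
Proof. by rewrite !mxE; apply: eq_bigr => j _; rewrite !mxE. Qed.

Theorem lemma1 (R : realFieldType) (I H m mbar : nat)
  (A : 'M[R]_(I, H)) (B : 'M[R]_(m, I))
  (hmbar : (mbar <= m)%N)
  (hB : forall t : 'cV[R]_I,
          cone_of A t <-> (forall k : 'I_m, (B *m t) k 0 <= 0))
  (hineq : forall k : 'I_m, (k < mbar)%N ->
          exists h : 'I_H, (row k B *m col h A) 0 0 != 0)
  (heq : forall k : 'I_m, (mbar <= k)%N ->
          forall t : 'cV[R]_I, cone_of A t -> (B *m t) k 0 = 0)
  (tau : R) (htau : 0 < tau) :
  exists phi : 'cV[R]_m,
    (exists x : 'cV[R]_I, phi = B *m x) /\
    (forall k : 'I_m, (k < mbar)%N -> 0 < phi k 0) /\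
    (forall k : 'I_m, (mbar <= k)%N -> phi k 0 = 0) /\
    (forall t : 'cV[R]_I,
       cone_tau A tau t <-> (forall k : 'I_m, (B *m t) k 0 <= - tau * phi k 0)).
Proof.
set c := A *m (const_mx (tau / H%:R) : 'cV_H).
exists (- tau^-1 *: (B *m c)); split; first by exists (- tau^-1 *: c); rewrite scalemxAr.
split=> [k k_lt | ]; last split=> [k k_ge | t].
- have [h0 Bh0_neq0] := hineq k k_lt.
  have H_gt0 : (0 < H)%N by apply: leq_ltn_trans (ltn_ord h0).
  have Bc_lt0 : (B *m c) k 0 < 0.
    apply: (cone_centre_lt0 _ _ hB); first by rewrite divr_gt0 ?ltr0n.
    by exists h0; rewrite -row_mul_col_entry.
  by rewrite mxE mulNr -mulrN mulr_gt0 ?invr_gt0 ?oppr_gt0.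
- rewrite mxE (heq k k_ge) ?mulr0 //.
  by apply: cone_of_const; rewrite divr_ge0 ?ler0n // ltW.
- have phiE k : - tau * (- tau^-1 *: (B *m c)) k 0 = (B *m c) k 0.
    by rewrite mxE mulrA mulrNN mulfV ?gt_eqF ?mul1r.
  apply: iff_trans (cone_tauE A tau t) _.
  apply: iff_trans (cone_of_translateP _ _ hB c t) _.
  by split=> le_tc k; move: (le_tc k); rewrite phiE.
Qed.
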